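(* Let $\varepsilon\in[0,1/6]$ and let $\alpha,\beta,\gamma\in\mathbb{C}$ satisfy $|\alpha|,|\beta|,|\gamma|\in[1-\varepsilon,1]$ and $|\alpha+\beta+\gamma|\le\varepsilon$. Then for each angle $\theta\in\{\arg(\alpha)-\arg(\beta),\ \arg(\beta)-\arg(\gamma),\ \arg(\gamma)-\arg(\alpha)\}$, interpreted (modulo $2\pi$) as an element of $[0,2\pi)$, one has $|\theta-2\pi/3|\le6\varepsilon$ or $|\theta-4\pi/3|\le6\varepsilon$. *)

From Stdlib Require Import Reals ZArith.
From Coquelicot Require Import Coquelicot.
Open Scope R_scope.

Definition is_arg (z : C) (a : R) : Prop :=
  z = ((Cmod z * cos a)%R, (Cmod z * sin a)%R).

Definition reduced_angle (x th : R) : Prop :=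
  0 <= th < 2 * PI /\ exists k : Z, th = x + 2 * PI * IZR k.

(** For two of the three numbers, say [alpha] and [beta], the law of cosines
    gives |alpha + beta|^2 = |alpha|^2 + |beta|^2 + 2 |alpha| |beta| cos(a - b),
    while |alpha + beta| = |gamma - (alpha + beta + gamma)| lies in
    [1 - 2 eps, 1 + eps].  As all moduli are close to 1 this pins cos(a - b)
    within O(eps) of -1/2, and the slope of cos near 2pi/3 (|sin| = sqrt 3 / 2)
    converts this into the bound 6 eps on the angle; the reflection
    th -> 2 pi - th, which preserves cos th, handles the case near 4pi/3. *)

From Stdlib Require Import Reals ZArith Lra Lia Psatz.
From Coquelicot Require Import Coquelicot.
Open Scope R_scope.

Lemma PI_gt_3 : 3 < PI.
Proof. pose proof PI2_3_2. lra. Qed.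

Lemma sin_ge_cubic (t : R) : 0 <= t <= PI -> t - t ^ 3 / 6 <= sin t.
Proof.
  intros [t_ge0 t_lePI].
  destruct (sin_bound t 0 t_ge0 t_lePI) as [lb _].
  unfold sin_approx, sin_term in lb; simpl in lb; lra.
Qed.

Lemma cos_ge_quadratic (t : R) : - PI / 2 <= t <= PI / 2 -> 1 - t ^ 2 / 2 <= cos t.
Proof.
  intros [t_ge t_le].
  destruct (cos_bound t 0 t_ge t_le) as [lb _].
  unfold cos_approx, cos_term in lb; simpl in lb; lra.
Qed.

Lemma cos_period_Z (x : R) (k : Z) : cos (x + 2 * PI * IZR k) = cos x.
Proof.
  destruct (Z_le_gt_dec 0 k) as [k_ge0 | k_lt0].
  - destruct (Z_of_nat_complete _ k_ge0) as [n ->].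
    rewrite <- INR_IZR_INZ, <- (cos_period x n).
    f_equal; ring.
  - destruct (Z_of_nat_complete (- k) ltac:(lia)) as [n kn].
    replace (IZR k) with (- INR n) by (rewrite INR_IZR_INZ, <- kn, opp_IZR; ring).
    rewrite <- (cos_period (x + 2 * PI * - INR n) n).
    f_equal; ring.
Qed.

Lemma cos_reduced_angle (x th : R) : reduced_angle x th -> cos th = cos x.
Proof. intros [_ [k ->]]. apply cos_period_Z. Qed.

Lemma Cmod_sqr_is_arg_plus (z w : C) (a b : R) :
  is_arg z a -> is_arg w b ->
  Cmod (z + w) ^ 2 = Cmod z ^ 2 + Cmod w ^ 2 + 2 * Cmod z * Cmod w * cos (a - b).
Proof.
  unfold is_arg; intros Ez Ew.
  set (r := Cmod z) in *; set (q := Cmod w) in *; clearbody r q; subst z w.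
  unfold Cmod, Cplus; cbn [fst snd].
  rewrite pow2_sqrt by (apply Rplus_le_le_0_compat; apply pow2_ge_0).
  rewrite cos_minus.
  pose proof (sin2_cos2 a) as Ha; pose proof (sin2_cos2 b) as Hb; unfold Rsqr in Ha, Hb.
  replace (r ^ 2) with (r ^ 2 * (sin a * sin a + cos a * cos a)) by (rewrite Ha; ring).
  replace (q ^ 2) with (q ^ 2 * (sin b * sin b + cos b * cos b)) by (rewrite Hb; ring).
  ring.
Qed.

Lemma Cmod_triangle_rev (u v : C) : Rabs (Cmod u - Cmod v) <= Cmod (u + v).
Proof.
  apply Rabs_le_between.
  pose proof (Cmod_triangle (u + v) (- v)) as Hu.
  pose proof (Cmod_triangle (u + v) (- u)) as Hv.
  rewrite Cmod_opp in Hu, Hv.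
  replace (u + v + - v)%C with u in Hu by (destruct u, v; unfold Cplus, Copp; simpl; f_equal; ring).
  replace (u + v + - u)%C with v in Hv by (destruct u, v; unfold Cplus, Copp; simpl; f_equal; ring).
  lra.
Qed.

(* The lower bound is where eps <= 1/6 enters:
   4 eps (1 - eps) <= 24/5 eps (1 - eps)^2 iff eps <= 1/6. *)
Lemma cos_add_half_bounds (eps r q m C : R) :
  0 <= eps <= 1 / 6 -> 1 - eps <= r <= 1 -> 1 - eps <= q <= 1 ->
  1 - 2 * eps <= m <= 1 + eps -> m ^ 2 = r ^ 2 + q ^ 2 + 2 * r * q * C ->
  - (12 / 5 * eps) <= C + 1 / 2 <= 4 * eps.
Proof.
  intros Heps Hr Hq Hm E.
  assert (rq_ge : (1 - eps) ^ 2 <= r * q) by (simpl; nra).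
  assert (rq_pos : 0 < r * q) by (simpl; nra).
  assert (sym_le1 : r ^ 2 + q ^ 2 - r * q <= 1) by (simpl; nra).
  assert (rq_le_sym : r * q <= r ^ 2 + q ^ 2 - r * q).
  { pose proof (pow2_ge_0 (r - q)). simpl in *; nra. }
  assert (E' : 2 * (r * q) * (C + 1 / 2) = m ^ 2 - (r ^ 2 + q ^ 2 - r * q)) by (rewrite E; field).
  split.
  - assert (gap_lo : 4 * eps * (1 - eps) <= 24 / 5 * eps * (1 - eps) ^ 2).
    { assert (0 <= eps * (1 - eps) * (24 / 5 * (1 - eps) - 4))
        by (apply Rmult_le_pos; [apply Rmult_le_pos |]; lra).
      simpl; nra. }
    assert (2 * (r * q) * (C + 1 / 2) >= 2 * (r * q) * - (12 / 5 * eps)) by (simpl; nra).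
    simpl in *; nra.
  - assert (gap_hi : (1 + eps) ^ 2 <= (1 + 8 * eps) * (1 - eps) ^ 2).
    { assert (0 <= eps * (1 - 4 * eps + 2 * eps ^ 2))
        by (apply Rmult_le_pos; simpl; nra).
      simpl; nra. }
    assert (2 * (r * q) * (C + 1 / 2) <= 2 * (r * q) * (4 * eps)) by (simpl; nra).
    simpl in *; nra.
Qed.

(* cos (2pi/3 -+ t) + 1/2 = (1 - cos t) / 2 +- sqrt 3 / 2 * sin t, and on [0, 1]
   we have sqrt 3 / 2 * sin t >= 2t/3 and (1 - cos t) / 2 <= t/4. *)
Lemma Rabs_sub_2PI3_le_of_cos (th t : R) :
  0 <= t <= 1 -> 0 <= th <= PI ->
  - (2 * t / 5) <= cos th + 1 / 2 <= 2 * t / 3 -> Rabs (th - 2 * PI / 3) <= t.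
Proof.
  intros Ht Hth Hcos.
  pose proof PI_gt_3.
  assert (sqrt3_ge : 8 / 5 <= sqrt 3).
  { rewrite <- (sqrt_Rsqr (8 / 5)) by lra.
    apply sqrt_le_1_alt; unfold Rsqr; lra. }
  assert (sin_ge : 5 * t / 6 <= sin t).
  { pose proof (sin_ge_cubic t ltac:(lra)). nra. }
  assert (slope : 2 * t / 3 <= sqrt 3 / 2 * sin t) by nra.
  apply Rabs_le_between'; split.
  - destruct (Rle_dec (2 * PI / 3 - t) th); [assumption | exfalso].
    assert (cos_lt : cos (2 * (PI / 3) - t) < cos th) by (apply cos_decreasing_1; lra).
    rewrite cos_minus, cos_2PI3, sin_2PI3 in cos_lt.
    pose proof (COS_bound t).
    lra.
  - destruct (Rle_dec th (2 * PI / 3 + t)); [assumption | exfalso].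
    assert (cos_gt : cos th < cos (2 * (PI / 3) + t)) by (apply cos_decreasing_1; lra).
    rewrite cos_plus, cos_2PI3, sin_2PI3 in cos_gt.
    pose proof (cos_ge_quadratic t ltac:(lra)).
    nra.
Qed.

Lemma reduced_angle_near_thirds (eps th : R) :
  0 <= eps <= 1 / 6 -> 0 <= th < 2 * PI ->
  - (12 / 5 * eps) <= cos th + 1 / 2 <= 4 * eps ->
  Rabs (th - 2 * PI / 3) <= 6 * eps \/ Rabs (th - 4 * PI / 3) <= 6 * eps.
Proof.
  intros Heps Hth Hcos.
  pose proof PI_gt_3.
  destruct (Rle_dec th PI).
  - left. apply Rabs_sub_2PI3_le_of_cos; lra.
  - right.
    assert (cos_refl : cos (2 * PI - th) = cos th).
    { rewrite cos_minus, cos_2PI, sin_2PI. ring. }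
    replace (th - 4 * PI / 3) with (- (2 * PI - th - 2 * PI / 3)) by field.
    rewrite Rabs_Ropp.
    apply Rabs_sub_2PI3_le_of_cos; rewrite ?cos_refl; lra.
Qed.

Lemma angle_diff_near_thirds (eps : R) (alpha beta gamma : C) (a b th : R) :
  0 <= eps <= 1 / 6 ->
  1 - eps <= Cmod alpha <= 1 ->
  1 - eps <= Cmod beta <= 1 ->
  1 - eps <= Cmod gamma <= 1 ->
  Cmod (alpha + beta + gamma) <= eps ->
  is_arg alpha a -> is_arg beta b -> reduced_angle (a - b) th ->
  Rabs (th - 2 * PI / 3) <= 6 * eps \/ Rabs (th - 4 * PI / 3) <= 6 * eps.
Proof.
  intros Heps Ha Hb Hg Hsum Aa Ab Hth.
  assert (Hab : 1 - 2 * eps <= Cmod (alpha + beta) <= 1 + eps).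
  { pose proof (Cmod_triangle_rev (alpha + beta) gamma) as rev.
    apply Rabs_le_between in rev; lra. }
  pose proof (Cmod_sqr_is_arg_plus alpha beta a b Aa Ab) as law_of_cosines.
  rewrite <- (cos_reduced_angle _ _ Hth) in law_of_cosines.
  apply reduced_angle_near_thirds; [assumption | apply Hth |].
  exact (cos_add_half_bounds _ _ _ _ _ Heps Ha Hb Hab law_of_cosines).
Qed.

Theorem lemma3 (eps : R) (alpha beta gamma : C) (a b c : R) :
  0 <= eps <= 1 / 6 ->
  1 - eps <= Cmod alpha <= 1 ->
  1 - eps <= Cmod beta <= 1 ->
  1 - eps <= Cmod gamma <= 1 ->
  Cmod (Cplus (Cplus alpha beta) gamma) <= eps ->
  is_arg alpha a -> is_arg beta b -> is_arg gamma c ->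
  forall th : R,
    (reduced_angle (a - b) th \/ reduced_angle (b - c) th \/ reduced_angle (c - a) th) ->
    Rabs (th - 2 * PI / 3) <= 6 * eps \/ Rabs (th - 4 * PI / 3) <= 6 * eps.
Proof.
  intros Heps Ha Hb Hg Hsum Aa Ab Ac th [Hth | [Hth | Hth]].
  - exact (angle_diff_near_thirds eps alpha beta gamma a b th Heps Ha Hb Hg Hsum Aa Ab Hth).
  - apply (angle_diff_near_thirds eps beta gamma alpha b c th); try assumption.
    rewrite Cplus_comm, Cplus_assoc; assumption.
  - apply (angle_diff_near_thirds eps gamma alpha beta c a th); try assumption.
    rewrite <- Cplus_assoc, Cplus_comm; assumption.
Qed.
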